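(* Let $A\in\mathbb{R}^{n\times m}$ have distinct columns and suppose $\mathrm{New}(A)$ is full dimensional (has nonempty interior in $\mathbb{R}^n$), every column of $A$ is either an extreme point of $\mathrm{New}(A)$ or lies in its interior, and either (1) at most one column lies in the interior of $\mathrm{New}(A)$, or (2) $\mathrm{New}(A)$ has exactly $n+1$ extreme points and at most two columns lie in its interior. Then $C_{\mathrm{SAGE}}(A)=C_{\mathrm{NNS}}(A)$.
   Context: Let $A\in\mathbb{R}^{n\times m}$ have distinct columns $a_1,\dots,a_m$. For $c\in\mathbb{R}^m$, $\mathrm{Sig}(A,c)$ denotes $x\mapsto\sum_{i=1}^m c_i\exp(a_i^\top x)$. $\mathrm{New}(A)=\mathrm{conv}\{a_1,\dots,a_m\}$. $C_{\mathrm{NNS}}(A)=\{c\in\mathbb{R}^m:\mathrm{Sig}(A,c)(x)\ge 0\ \forall x\in\mathbb{R}^n\}$, $C_{\mathrm{AGE}}(A,k)=\{c\in C_{\mathrm{NNS}}(A): c_i\ge 0\ \forall i\ne k\}$, $C_{\mathrm{SAGE}}(A)=\sum_{k=1}^m C_{\mathrm{AGE}}(A,k)$. *)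

From Stdlib Require Import Reals Lra.
Open Scope R_scope.

(* Points of R^n are functions nat -> R; only coordinates j < n matter.
   The matrix A in R^{n x m} is  A : nat -> nat -> R  with  A i j  the
   j-th coordinate of the i-th column a_i (i < m, j < n). *)

Fixpoint sumR (n : nat) (f : nat -> R) : R :=
  match n with O => 0 | S k => sumR k f + f k end.

Definition dot (n : nat) (a x : nat -> R) : R := sumR n (fun j => a j * x j).

Definition veq (n : nat) (y z : nat -> R) : Prop := forall j, (j < n)%nat -> y j = z j.

Definition Sig (n m : nat) (A : nat -> nat -> R) (c : nat -> R) (x : nat -> R) : R :=
  sumR m (fun i => c i * exp (dot n (A i) x)).

Definition C_NNS (n m : nat) (A : nat -> nat -> R) (c : nat -> R) : Prop :=
  forall x : nat -> R, 0 <= Sig n m A c x.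

Definition C_AGE (n m : nat) (A : nat -> nat -> R) (k : nat) (c : nat -> R) : Prop :=
  C_NNS n m A c /\ (forall i, (i < m)%nat -> i <> k -> 0 <= c i).

Definition C_SAGE (n m : nat) (A : nat -> nat -> R) (c : nat -> R) : Prop :=
  exists cs : nat -> nat -> R,
    (forall k, (k < m)%nat -> C_AGE n m A k (cs k)) /\
    (forall i, (i < m)%nat -> c i = sumR m (fun k => cs k i)).

Definition inNew (n m : nat) (A : nat -> nat -> R) (y : nat -> R) : Prop :=
  exists lam : nat -> R,
    (forall i, (i < m)%nat -> 0 <= lam i) /\ sumR m lam = 1 /\
    (forall j, (j < n)%nat -> y j = sumR m (fun i => lam i * A i j)).

Definition inInterior (n m : nat) (A : nat -> nat -> R) (y : nat -> R) : Prop :=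
  exists eps, 0 < eps /\
    forall z : nat -> R, (forall j, (j < n)%nat -> Rabs (z j - y j) < eps) ->
      inNew n m A z.

Definition full_dimensional (n m : nat) (A : nat -> nat -> R) : Prop :=
  exists y, inInterior n m A y.

Definition isExtreme (n m : nat) (A : nat -> nat -> R) (p : nat -> R) : Prop :=
  inNew n m A p /\
  forall (y z : nat -> R) (t : R),
    inNew n m A y -> inNew n m A z -> 0 < t < 1 ->
    veq n p (fun j => t * y j + (1 - t) * z j) ->
    veq n y p /\ veq n z p.

Definition distinct_columns (n m : nat) (A : nat -> nat -> R) : Prop :=
  forall i k, (i < m)%nat -> (k < m)%nat -> i <> k -> ~ veq n (A i) (A k).

Definition num_extreme_points (n m : nat) (A : nat -> nat -> R) (N : nat) : Prop :=
  exists p : nat -> (nat -> R),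
    (forall k, (k < N)%nat -> isExtreme n m A (p k)) /\
    (forall k l, (k < N)%nat -> (l < N)%nat -> k <> l -> ~ veq n (p k) (p l)) /\
    (forall y, isExtreme n m A y -> exists k, (k < N)%nat /\ veq n y (p k)).

(* A nonnegative signomial has nonnegative coefficients at the extreme columns (along a
   direction exposing such a column its term dominates), so a negative coefficient sits at an
   interior column; with at most one of them the signomial is itself an AGE signomial.
   Otherwise New(A) is a simplex whose vertices are the columns other than the two interior
   columns P and Q carrying negative coefficients.  Affine functions take arbitrary values on
   these vertices, so for s in [0,1] there is an x with c_l exp(a_l x) proportional to
   s lam_l + (1 - s) mu_l at every vertex, lam and mu being the barycentric coordinates of a_P
   and a_Q.  Nonnegativity at these points and the intermediate value theorem produce an s for
   which the vertex coefficients split between an AGE signomial negative at P and one negative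
   at Q, both certified by the weighted AM-GM inequality. *)

From Stdlib Require Import Reals Ranalysis5 Lra Lia Classical Bool.
Open Scope R_scope.

Lemma sumR_ext n f g : (forall i, (i < n)%nat -> f i = g i) -> sumR n f = sumR n g.
Proof. induction n as [|n IH]; simpl; intros H; auto. rewrite IH, H; auto; intros; apply H; lia. Qed.

Lemma sumR_plus n f g : sumR n (fun i => f i + g i) = sumR n f + sumR n g.
Proof. induction n; simpl; [lra|]. rewrite IHn; lra. Qed.

Lemma sumR_minus n f g : sumR n (fun i => f i - g i) = sumR n f - sumR n g.
Proof. induction n; simpl; [lra|]. rewrite IHn; lra. Qed.

Lemma sumR_scal n c f : sumR n (fun i => c * f i) = c * sumR n f.
Proof. induction n; simpl; [lra|]. rewrite IHn; lra. Qed.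

Lemma sumR_const n c : sumR n (fun _ => c) = INR n * c.
Proof. induction n; simpl; [lra|]. rewrite IHn. destruct n; simpl; lra. Qed.

Lemma sumR_zero n f : (forall i, (i < n)%nat -> f i = 0) -> sumR n f = 0.
Proof. intros H. rewrite (sumR_ext n f (fun _ => 0)) by auto. rewrite sumR_const. ring. Qed.

Lemma sumR_le n f g : (forall i, (i < n)%nat -> f i <= g i) -> sumR n f <= sumR n g.
Proof.
  induction n; simpl; intros H; [lra|].
  assert (f n <= g n) by (apply H; lia).
  assert (sumR n f <= sumR n g) by (apply IHn; intros; apply H; lia). lra.
Qed.

Lemma sumR_nonneg n f : (forall i, (i < n)%nat -> 0 <= f i) -> 0 <= sumR n f.
Proof. intros H. rewrite <- (sumR_zero n (fun _ => 0)) by auto. apply sumR_le; auto. Qed.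

Lemma sumR_term_le n f k :
  (forall i, (i < n)%nat -> 0 <= f i) -> (k < n)%nat -> f k <= sumR n f.
Proof.
  induction n; simpl; intros H Hk; [lia|].
  assert (0 <= sumR n f) by (apply sumR_nonneg; intros; apply H; lia).
  destruct (Nat.eq_dec k n) as [->|Hkn]; [lra|].
  assert (f k <= sumR n f) by (apply IHn; [intros; apply H|]; lia).
  assert (0 <= f n) by (apply H; lia). lra.
Qed.

Lemma sumR_eq0_nonneg n f :
  (forall i, (i < n)%nat -> 0 <= f i) -> sumR n f = 0 -> forall k, (k < n)%nat -> f k = 0.
Proof.
  intros H Hs k Hk. assert (f k <= sumR n f) by (apply sumR_term_le; auto).
  assert (0 <= f k) by auto. lra.
Qed.

Lemma sumR_pos_term n f :
  (forall i, (i < n)%nat -> 0 <= f i) -> sumR n f = 1 -> exists k, (k < n)%nat /\ 0 < f k.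
Proof.
  intros H Hs. apply NNPP. intros Hno.
  rewrite sumR_zero in Hs; [lra|]. intros i Hi.
  apply Rle_antisym; [apply Rnot_lt_le; intros Hp; apply Hno; eauto|auto].
Qed.

Lemma sumR_swap n m F :
  sumR n (fun i => sumR m (fun k => F i k)) = sumR m (fun k => sumR n (fun i => F i k)).
Proof.
  induction n; simpl; [now rewrite sumR_zero|].
  rewrite IHn, <- sumR_plus. auto.
Qed.

Lemma sumR_single n f k :
  (k < n)%nat -> (forall i, (i < n)%nat -> i <> k -> f i = 0) -> sumR n f = f k.
Proof.
  induction n; simpl; intros Hk H; [lia|].
  destruct (Nat.eq_dec k n) as [->|Hkn].
  - rewrite sumR_zero; [ring|]. intros; apply H; lia.
  - rewrite IHn, (H n); [ring|lia|auto|lia|]. intros; apply H; lia.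
Qed.

Lemma sumR_delta n k a f :
  (k < n)%nat -> sumR n (fun l => (if (l =? k)%nat then a else 0) * f l) = a * f k.
Proof.
  intros Hk. rewrite (sumR_single _ _ k Hk), Nat.eqb_refl; auto.
  intros i _ Hi. apply Nat.eqb_neq in Hi. rewrite Hi. ring.
Qed.

Lemma sumR_delta1 n k a : (k < n)%nat -> sumR n (fun l => if (l =? k)%nat then a else 0) = a.
Proof.
  intros Hk. transitivity (a * 1); [|ring]. rewrite <- (sumR_delta n k a (fun _ => 1)) by auto.
  apply sumR_ext. intros; ring.
Qed.

Lemma sumR_remove n f k :
  (k < n)%nat -> sumR n (fun l => if (l =? k)%nat then 0 else f l) = sumR n f - f k.
Proof.
  intros Hk. rewrite <- (Rmult_1_l (f k)), <- (sumR_delta n k 1 f), <- sumR_minus by auto.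
  apply sumR_ext. intros l _. destruct (l =? k)%nat; ring.
Qed.

Lemma dot_ext_l n a b x : veq n a b -> dot n a x = dot n b x.
Proof. intros H. apply sumR_ext. intros i Hi. rewrite H; auto. Qed.

Lemma dot_plus_l n a b x : dot n (fun j => a j + b j) x = dot n a x + dot n b x.
Proof. unfold dot. rewrite <- sumR_plus. apply sumR_ext. intros; ring. Qed.

Lemma dot_plus_r n a x y : dot n a (fun j => x j + y j) = dot n a x + dot n a y.
Proof. unfold dot. rewrite <- sumR_plus. apply sumR_ext. intros; ring. Qed.

Lemma dot_scal_l n t a x : dot n (fun j => t * a j) x = t * dot n a x.
Proof. unfold dot. rewrite <- sumR_scal. apply sumR_ext. intros; ring. Qed.

Lemma dot_scal_r n a t x : dot n a (fun j => t * x j) = t * dot n a x.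
Proof. unfold dot. rewrite <- sumR_scal. apply sumR_ext. intros; ring. Qed.

Lemma dot_sum_l n m lam (A : nat -> nat -> R) x :
  dot n (fun j => sumR m (fun i => lam i * A i j)) x = sumR m (fun i => lam i * dot n (A i) x).
Proof.
  unfold dot. rewrite (sumR_ext n _ (fun j => sumR m (fun i => lam i * A i j * x j))).
  - rewrite sumR_swap. apply sumR_ext. intros. rewrite <- sumR_scal. apply sumR_ext. intros; ring.
  - intros. rewrite (Rmult_comm (sumR _ _)), <- sumR_scal. apply sumR_ext. intros; ring.
Qed.

Lemma dot_unit_l n k x : (k < n)%nat -> dot n (fun j => if (j =? k)%nat then 1 else 0) x = x k.
Proof. intros. unfold dot. rewrite sumR_delta; auto. ring. Qed.

Lemma dot_zero_r n a x : (forall j, (j < n)%nat -> x j = 0) -> dot n a x = 0.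
Proof. intros H. apply sumR_zero. intros; rewrite H; auto; ring. Qed.

Lemma dot_self_pos n x : (exists j, (j < n)%nat /\ x j <> 0) -> 0 < dot n x x.
Proof.
  intros [j [Hj Hx]]. apply Rlt_le_trans with (x j * x j); [nra|].
  apply (sumR_term_le n (fun j => x j * x j)); auto. intros; nra.
Qed.

Lemma dot_self_eq0 n x : dot n x x = 0 -> forall j, (j < n)%nat -> x j = 0.
Proof.
  intros H j Hj. destruct (Req_dec (x j) 0); auto.
  assert (0 < dot n x x) by (apply dot_self_pos; eauto). lra.
Qed.

Definition conv_weights n m (A : nat -> nat -> R) (S : nat -> bool) (lam y : nat -> R) : Prop :=
  (forall i, (i < m)%nat -> 0 <= lam i) /\ (forall i, (i < m)%nat -> S i = false -> lam i = 0) /\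
  sumR m lam = 1 /\ forall j, (j < n)%nat -> y j = sumR m (fun i => lam i * A i j).

Definition inConv n m A S y : Prop := exists lam, conv_weights n m A S lam y.

Lemma inNew_inConv_all n m A y : inNew n m A y -> inConv n m A (fun _ => true) y.
Proof. intros [lam [L0 [L1 L2]]]. exists lam. repeat split; auto. discriminate. Qed.

Lemma affine_conv_weights n m A S lam y x k :
  conv_weights n m A S lam y -> dot n y x + k = sumR m (fun i => lam i * (dot n (A i) x + k)).
Proof.
  intros [_ [_ [Hs Hy]]]. rewrite (dot_ext_l n y (fun j => sumR m (fun i => lam i * A i j))) by auto.
  rewrite dot_sum_l.
  rewrite (sumR_ext m (fun i => lam i * (dot n (A i) x + k))
    (fun i => lam i * dot n (A i) x + k * lam i)) by (intros; ring).
  rewrite sumR_plus, sumR_scal, Hs. ring.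
Qed.

Lemma col_inNew n m A k : (k < m)%nat -> inNew n m A (A k).
Proof.
  intros Hk. exists (fun l => if (l =? k)%nat then 1 else 0). split; [|split].
  - intros l _. destruct (l =? k)%nat; lra.
  - apply sumR_delta1; auto.
  - intros j Hj. rewrite sumR_delta; auto. ring.
Qed.

Lemma exp_convex_comb m lam y :
  (forall i, (i < m)%nat -> 0 <= lam i) -> sumR m lam = 1 ->
  exp (sumR m (fun i => lam i * y i)) <= sumR m (fun i => lam i * exp (y i)).
Proof.
  intros H0 H1. set (yb := sumR m (fun i => lam i * y i)).
  (* the tangent line of exp at the barycentre lies below exp *)
  assert (Htan : forall i, exp yb * (1 + (y i - yb)) <= exp (y i)).
  { intros i. replace (exp (y i)) with (exp yb * exp (y i - yb))
      by (rewrite <- exp_plus; f_equal; ring).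
    apply Rmult_le_compat_l; [left; apply exp_pos|apply exp_ineq1_le]. }
  apply Rle_trans with (sumR m (fun i => lam i * (exp yb * (1 + (y i - yb))))).
  - rewrite (sumR_ext m _ (fun i => exp yb * lam i + exp yb * (lam i * y i) - exp yb * yb * lam i))
      by (intros; ring).
    rewrite sumR_minus, sumR_plus, !sumR_scal, H1. fold yb. lra.
  - apply sumR_le. intros. apply Rmult_le_compat_l; auto.
Qed.

Lemma conv_weights_veq n m A S lam y z :
  veq n y z -> conv_weights n m A S lam y -> conv_weights n m A S lam z.
Proof. intros Hv [L0 [L1 [L2 L3]]]. repeat split; auto. intros; rewrite <- Hv; auto. Qed.

Lemma conv_weights_mix n m A S al be y z t : 0 <= t <= 1 ->
  conv_weights n m A S al y -> conv_weights n m A S be z ->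
  conv_weights n m A S (fun l => t * al l + (1 - t) * be l) (fun k => t * y k + (1 - t) * z k).
Proof.
  intros Ht [A0 [A1 [A2 A3]]] [B0 [B1 [B2 B3]]]. split; [|split; [|split]].
  - intros l Hl. specialize (A0 l Hl). specialize (B0 l Hl). nra.
  - intros l Hl HS. rewrite A1, B1 by auto. ring.
  - rewrite sumR_plus, !sumR_scal, A2, B2. ring.
  - intros k Hk. rewrite A3, B3 by auto. rewrite <- !sumR_scal, <- sumR_plus.
    apply sumR_ext. intros; ring.
Qed.

Lemma conv_weights_concentrated n m A S lam y j :
  (j < m)%nat -> conv_weights n m A S lam y -> lam j = 1 -> veq n y (A j).
Proof.
  intros Hj [L0 [_ [L2 L3]]] Hlj k Hk. rewrite L3 by auto.
  assert (Hrest : forall l, (l < m)%nat -> l <> j -> lam l = 0).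
  { intros l Hl Hlj'.
    assert (H := sumR_eq0_nonneg m (fun l => if (l =? j)%nat then 0 else lam l)).
    specialize (H ltac:(intros i Hi; cbv beta; destruct (i =? j)%nat; [lra|auto])).
    rewrite sumR_remove, L2, Hlj in H by auto. specialize (H ltac:(ring) l Hl). cbv beta in H.
    rewrite (proj2 (Nat.eqb_neq _ _) Hlj') in H. auto. }
  rewrite (sumR_single _ _ j Hj), Hlj; [ring|]. intros l Hl Hl'. rewrite Hrest; auto; ring.
Qed.

Lemma conv_weights_drop_self n m A S g j : (j < m)%nat ->
  conv_weights n m A S g (A j) -> g j < 1 ->
  conv_weights n m A (fun l => S l && negb (l =? j)%nat)
    (fun l => (if (l =? j)%nat then 0 else g l) / (1 - g j)) (A j).
Proof.
  intros Hj [G0 [G1 [G2 G3]]] Hg. split; [|split; [|split]].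
  - intros l Hl. apply Rmult_le_pos; [destruct (l =? j)%nat; [lra|auto]|].
    left. apply Rinv_0_lt_compat. lra.
  - intros l Hl HS. destruct (Nat.eqb_spec l j); [unfold Rdiv; ring|].
    rewrite andb_true_r in HS. rewrite G1 by auto. unfold Rdiv; ring.
  - unfold Rdiv. rewrite (sumR_ext _ _ (fun l => / (1 - g j) * (if (l =? j)%nat then 0 else g l)))
      by (intros; ring).
    rewrite sumR_scal, sumR_remove, G2 by auto. field. lra.
  - intros k Hk. unfold Rdiv.
    rewrite (sumR_ext _ _ (fun l => / (1 - g j) * (if (l =? j)%nat then 0 else g l * A l k)))
      by (intros l _; destruct (l =? j)%nat; ring).
    rewrite sumR_scal, (sumR_remove m (fun l => g l * A l k)), <- G3 by auto. field. lra.
Qed.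

Lemma conv_weights_substitute n m A S g nu y j : (j < m)%nat ->
  conv_weights n m A (fun l => S l && negb (l =? j)%nat) g (A j) ->
  conv_weights n m A S nu y ->
  conv_weights n m A (fun l => S l && negb (l =? j)%nat)
    (fun l => (if (l =? j)%nat then 0 else nu l) + nu j * g l) y.
Proof.
  intros Hj [G0 [G1 [G2 G3]]] [N0 [N1 [N2 N3]]]. split; [|split; [|split]].
  - intros l Hl. assert (0 <= nu j) by auto. assert (0 <= g l) by auto.
    destruct (l =? j)%nat; [nra|]. assert (0 <= nu l) by auto. nra.
  - intros l Hl HS. rewrite G1 by auto. destruct (Nat.eqb_spec l j); [ring|].
    rewrite andb_true_r in HS. rewrite N1 by auto. ring.
  - rewrite sumR_plus, sumR_scal, sumR_remove, G2, N2 by auto. ring.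
  - intros k Hk.
    rewrite (sumR_ext _ _ (fun l => (if (l =? j)%nat then 0 else nu l * A l k) + nu j * (g l * A l k)))
      by (intros l _; destruct (l =? j)%nat; ring).
    rewrite sumR_plus, sumR_scal, (sumR_remove m (fun l => nu l * A l k)), <- G3, <- N3 by auto.
    ring.
Qed.

Lemma conv_remove_nonextreme n m A S j :
  (forall y, inNew n m A y -> inConv n m A S y) -> (j < m)%nat -> ~ isExtreme n m A (A j) ->
  forall y, inNew n m A y -> inConv n m A (fun l => S l && negb (l =? j)%nat) y.
Proof.
  intros HS Hj Hne.
  assert (Hsplit : exists y1 z1 t, inNew n m A y1 /\ inNew n m A z1 /\ 0 < t < 1 /\
     veq n (A j) (fun k => t * y1 k + (1 - t) * z1 k) /\ ~ (veq n y1 (A j) /\ veq n z1 (A j))).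
  { apply NNPP. intros C. apply Hne. split; [apply col_inNew; auto|].
    intros y z t Hy Hz Ht Hv. apply NNPP. intros C2. apply C. exists y, z, t. auto. }
  destruct Hsplit as [y1 [z1 [t [Hy1 [Hz1 [Ht [Hv Hnot]]]]]]].
  destruct (HS y1 Hy1) as [al Hal], (HS z1 Hz1) as [be Hbe].
  pose proof (conv_weights_mix n m A S al be y1 z1 t ltac:(lra) Hal Hbe) as Hga.
  apply (conv_weights_veq _ _ _ _ _ _ (A j)) in Hga; [|intros k Hk; symmetry; auto].
  set (ga := fun l => t * al l + (1 - t) * be l) in Hga.
  assert (Hga1 : ga j < 1).
  { pose proof Hal as [A0 [_ [A2 _]]]. pose proof Hbe as [B0 [_ [B2 _]]].
    assert (al j <= 1) by (rewrite <- A2; apply sumR_term_le; auto).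
    assert (be j <= 1) by (rewrite <- B2; apply sumR_term_le; auto).
    apply Rnot_le_lt. intros C. unfold ga in C.
    apply Hnot. split; [apply (conv_weights_concentrated n m A S al)|
                        apply (conv_weights_concentrated n m A S be)]; auto; nra. }
  intros y Hy. destruct (HS y Hy) as [nu Hnu].
  eexists. apply conv_weights_substitute; [auto| |exact Hnu].
  apply (conv_weights_drop_self n m A S ga j); auto.
Qed.

Lemma extreme_weight_pos_col n m A S p b l0 : isExtreme n m A p -> conv_weights n m A S b p ->
  (l0 < m)%nat -> 0 < b l0 -> veq n (A l0) p.
Proof.
  intros [Hin Hex] [B0 [_ [B1 Hp]]] Hl0 Hb.
  assert (Hb1 : b l0 <= 1) by (rewrite <- B1; apply sumR_term_le; auto).
  (* write p as a proper convex combination of A l0 and another point of New(A) *)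
  set (t := b l0 / 2).
  set (b' := fun l => (b l - (if (l =? l0)%nat then t else 0)) / (1 - t)).
  assert (Ht : 0 < t < 1) by (unfold t; lra).
  assert (Hsum : forall f, (1 - t) * sumR m (fun l => b' l * f l) = sumR m (fun l => b l * f l) - t * f l0).
  { intros f. rewrite <- sumR_scal, <- (sumR_delta m l0 t f), <- sumR_minus by auto.
    apply sumR_ext. intros. unfold b'. field. lra. }
  destruct (Hex (A l0) (fun j => sumR m (fun l => b' l * A l j)) t) as [H1 _]; auto.
  - apply col_inNew; auto.
  - exists b'. split; [|split].
    + intros l Hl. unfold b'. apply Rmult_le_pos; [|left; apply Rinv_0_lt_compat; lra].
      destruct (Nat.eqb_spec l l0); [subst; unfold t; lra|]. rewrite Rminus_0_r; auto.
    + apply (Rmult_eq_reg_l (1 - t)); [|lra].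
      rewrite (sumR_ext m b' (fun l => b' l * 1)) by (intros; ring).
      rewrite Hsum, (sumR_ext m _ b) by (intros; ring). rewrite B1. ring.
    + intros; reflexivity.
  - intros j Hj. simpl. rewrite (Hsum (fun l => A l j)), <- Hp; auto. ring.
Qed.

Lemma interior_not_extreme n m A y : (1 <= n)%nat -> inInterior n m A y -> ~ isExtreme n m A y.
Proof.
  intros Hn [eps [He Hball]] [_ Hex].
  set (e0 := fun j : nat => if (j =? 0)%nat then 1 else 0).
  assert (Hb : forall s, Rabs s < 1 -> inNew n m A (fun j => y j + s * (eps / 2) * e0 j)).
  { intros s Hs. apply Hball. intros j Hj.
    replace (y j + s * (eps / 2) * e0 j - y j) with (s * (eps / 2) * e0 j) by ring.
    rewrite !Rabs_mult, (Rabs_right (eps / 2)) by lra. unfold e0.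
    destruct (j =? 0)%nat; [rewrite Rabs_R1|rewrite Rabs_R0]; nra. }
  destruct (Hex (fun j => y j + 1/2 * (eps/2) * e0 j) (fun j => y j + (-1/2) * (eps/2) * e0 j) (1/2))
    as [H1 _].
  - apply Hb. rewrite Rabs_right; lra.
  - apply Hb. rewrite Rabs_left; lra.
  - lra.
  - intros j Hj. cbv beta. field.
  - specialize (H1 0%nat ltac:(lia)). simpl in H1. unfold e0 in H1. simpl in H1. lra.
Qed.

(** * Gordan's alternative *)

Lemma perturb_pos r (keep : nat -> bool) (a b : nat -> R) :
  (forall l, (l < r)%nat -> keep l = true -> 0 < a l) ->
  exists eta, 0 < eta /\ forall l, (l < r)%nat -> keep l = true -> 0 < a l + eta * b l.
Proof.
  intros Ha. set (M := sumR r (fun l => if keep l then Rabs (b l) / a l else 0)).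
  assert (Hq : forall l, (l < r)%nat -> 0 <= (if keep l then Rabs (b l) / a l else 0)).
  { intros l Hl. destruct (keep l) eqn:K; [|lra].
    apply Rmult_le_pos; [apply Rabs_pos|left; apply Rinv_0_lt_compat; auto]. }
  assert (HM : 0 <= M) by (apply sumR_nonneg; auto).
  exists (1 / (1 + M)). split; [apply Rdiv_lt_0_compat; lra|]. intros l Hl K.
  assert (Hl' := sumR_term_le r _ l Hq Hl). cbv beta in Hl'. rewrite K in Hl'. fold M in Hl'.
  specialize (Ha l Hl K).
  assert (Hb : Rabs (b l) <= M * a l).
  { apply (Rmult_le_compat_r (a l)) in Hl'; [|lra].
    unfold Rdiv in Hl'. rewrite Rmult_assoc, Rinv_l, Rmult_1_r in Hl' by lra. auto. }
  assert (- Rabs (b l) <= b l) by (pose proof (Rle_abs (- b l)); rewrite Rabs_Ropp in *; lra).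
  assert (Heta : 1 / (1 + M) * (1 + M) = 1) by (field; lra).
  assert (0 < 1 / (1 + M)) by (apply Rdiv_lt_0_compat; lra).
  nra.
Qed.

Lemma conv_weights_extend n r X keep b y :
  conv_weights n r X keep b y -> conv_weights n (S r) X keep (fun l => if (l <? r)%nat then b l else 0) y.
Proof.
  intros [B0 [B1 [B2 B3]]].
  assert (Hr : forall f, sumR (S r) (fun l => (if (l <? r)%nat then b l else 0) * f l) = sumR r (fun l => b l * f l)).
  { intros f. simpl. rewrite Nat.ltb_irrefl, Rmult_0_l, Rplus_0_r.
    apply sumR_ext. intros l Hl. apply Nat.ltb_lt in Hl. rewrite Hl. auto. }
  split; [|split; [|split]].
  - intros l Hl. destruct (Nat.ltb_spec l r); [apply B0; auto|lra].
  - intros l Hl K. destruct (Nat.ltb_spec l r); [apply B1; auto|lra].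
  - rewrite <- B2, (sumR_ext r b (fun l => b l * 1)), <- Hr by (intros; ring).
    apply sumR_ext. intros; ring.
  - intros j Hj. rewrite Hr. auto.
Qed.

(* Each [proj_along n w r v l] is orthogonal to [v]. *)
Definition proj_along n (w : nat -> nat -> R) r (v : nat -> R) : nat -> nat -> R :=
  fun l j => dot n (w l) v * w r j - dot n (w r) v * w l j.

Lemma dot_proj_along n w r v l x :
  dot n (proj_along n w r v l) x = dot n (w l) v * dot n (w r) x - dot n (w r) v * dot n (w l) x.
Proof. unfold proj_along, dot. rewrite <- !sumR_scal, <- sumR_minus. apply sumR_ext. intros; ring. Qed.

Lemma gordan_step_dir n r keep w v v' : (exists j, (j < n)%nat /\ w r j <> 0) ->
  (forall l, (l < r)%nat -> keep l = true -> 0 < dot n (proj_along n w r v l) v') ->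
  exists u, forall l, (l < S r)%nat -> keep l = true -> 0 < dot n (w l) u.
Proof.
  intros Hnz Hv'.
  destruct (perturb_pos r keep _ (fun l => dot n (w l) (w r)) Hv') as [eta [He Hp]].
  exists (fun j => - dot n (w r) v * v' j + dot n (w r) v' * v j + eta * w r j).
  intros l Hl K. rewrite !dot_plus_r, !dot_scal_r.
  destruct (Nat.eq_dec l r) as [->|Hlr].
  - assert (0 < dot n (w r) (w r)) by (apply dot_self_pos; auto). nra.
  - specialize (Hp l ltac:(lia) K). rewrite dot_proj_along in Hp. lra.
Qed.

Lemma gordan_step_weights n r keep w v b : keep r = true ->
  (forall l, (l < r)%nat -> keep l = true -> 0 < dot n (w l) v) -> dot n (w r) v <= 0 ->
  conv_weights n r (proj_along n w r v) keep b (fun _ => 0) ->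
  exists b', conv_weights n (S r) w keep b' (fun _ => 0).
Proof.
  intros Kr Hv Hal Hb. pose proof Hb as [B0 [B1 [B2 B3]]].
  set (al := dot n (w r) v) in *. set (g := fun l => dot n (w l) v).
  set (Sg := sumR r (fun l => b l * g l)).
  assert (Hnn : forall l, (l < r)%nat -> 0 <= b l * g l).
  { intros l Hl. destruct (keep l) eqn:Kl; [|rewrite B1; auto; lra].
    apply Rmult_le_pos; auto. left. apply Hv; auto. }
  assert (HS : 0 < Sg).
  { destruct (sumR_pos_term r b B0 B2) as [l [Hl Hbl]].
    assert (Kl : keep l = true) by (destruct (keep l) eqn:K; auto; rewrite B1 in Hbl; auto; lra).
    assert (0 < g l) by (apply Hv; auto).
    apply Rlt_le_trans with (b l * g l); [nra|]. apply (sumR_term_le r (fun l => b l * g l)); auto. }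
  exists (fun l => if (l <? r)%nat then - al * b l / (Sg - al) else Sg / (Sg - al)).
  assert (Hsum : forall f, sumR (S r) (fun l => (if (l <? r)%nat then - al * b l / (Sg - al)
      else Sg / (Sg - al)) * f l) = (- al * sumR r (fun l => b l * f l) + Sg * f r) / (Sg - al)).
  { intros f. simpl. rewrite Nat.ltb_irrefl.
    rewrite (sumR_ext r _ (fun l => (- al / (Sg - al)) * (b l * f l))), sumR_scal.
    - field. lra.
    - intros l Hl. apply Nat.ltb_lt in Hl. rewrite Hl. field. lra. }
  split; [|split; [|split]].
  - intros l Hl. destruct (Nat.ltb_spec l r).
    + unfold Rdiv. apply Rmult_le_pos; [|left; apply Rinv_0_lt_compat; lra].
      assert (0 <= b l) by auto. nra.
    + left. apply Rdiv_lt_0_compat; lra.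
  - intros l Hl K. destruct (Nat.ltb_spec l r).
    + rewrite B1; auto. unfold Rdiv; ring.
    + assert (l = r) by lia. congruence.
  - rewrite (sumR_ext (S r) _ (fun l => _ * (fun _ => 1) l)) by (intros; cbv beta; ring).
    rewrite Hsum, (sumR_ext r _ b), B2 by (intros; ring). field. lra.
  - intros j Hj. rewrite Hsum. specialize (B3 j Hj).
    unfold proj_along in B3. fold al in B3.
    rewrite (sumR_ext r _ (fun l => w r j * (b l * g l) - al * (b l * w l j))) in B3
      by (intros; unfold g; ring).
    rewrite sumR_minus, !sumR_scal in B3. fold Sg in B3.
    assert (- al * sumR r (fun l => b l * w l j) + Sg * w r j = 0) by lra.
    rewrite H. unfold Rdiv. ring.
Qed.

Lemma gordan n r (keep : nat -> bool) (w : nat -> nat -> R) :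
  (exists v, forall l, (l < r)%nat -> keep l = true -> 0 < dot n (w l) v) \/
  (exists b, conv_weights n r w keep b (fun _ => 0)).
Proof.
  revert w. induction r as [|r IH]; intros w.
  { left. exists (fun _ => 0). intros; lia. }
  destruct (IH w) as [[v Hv]|[b Hb]];
    [|right; eexists; apply conv_weights_extend; exact Hb].
  destruct (Rlt_dec 0 (dot n (w r) v)) as [Hr|Hr].
  { left. exists v. intros l Hl K. destruct (Nat.eq_dec l r) as [->|]; auto. apply Hv; auto; lia. }
  destruct (keep r) eqn:Kr.
  2:{ left. exists v. intros l Hl K. destruct (Nat.eq_dec l r) as [->|]; [congruence|]. apply Hv; auto; lia. }
  destruct (classic (exists j, (j < n)%nat /\ w r j <> 0)) as [Hnz|Hz].
  - destruct (IH (proj_along n w r v)) as [[v' Hv']|[b Hb]].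
    + left. apply (gordan_step_dir n r keep w v v'); auto.
    + right. apply (gordan_step_weights n r keep w v b); auto. lra.
  - right. exists (fun l => if (l =? r)%nat then 1 else 0). split; [|split; [|split]].
    + intros l _. destruct (l =? r)%nat; lra.
    + intros l Hl K. destruct (Nat.eqb_spec l r) as [->|]; [congruence|auto].
    + apply sumR_delta1. lia.
    + intros j Hj. rewrite sumR_delta by lia.
      destruct (Req_dec (w r j) 0) as [->|Hw]; [ring|exfalso; eauto].
Qed.

(** * Coefficients at extreme columns *)

Lemma exp_decay_uniform m i (a del : nat -> R) eps : 0 < eps ->
  (forall l, (l < m)%nat -> l <> i -> 0 < del l) ->
  exists t, 0 <= t /\ forall l, (l < m)%nat -> l <> i -> a l * exp (- (t * del l)) <= eps.
Proof.
  intros He Hd.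
  set (q := fun l => if (l =? i)%nat then 0 else Rabs (a l) / (eps * del l)).
  assert (Hq : forall l, (l < m)%nat -> 0 <= q l).
  { intros l Hl. unfold q. destruct (Nat.eqb_spec l i); [lra|].
    specialize (Hd l Hl n). apply Rmult_le_pos; [apply Rabs_pos|left; apply Rinv_0_lt_compat; nra]. }
  exists (sumR m q). split; [apply sumR_nonneg; auto|]. intros l Hl Hli.
  set (t := sumR m q). specialize (Hd l Hl Hli).
  assert (Hql : Rabs (a l) / (eps * del l) <= t).
  { pose proof (sumR_term_le m q l Hq Hl) as H. unfold q in H at 1.
    rewrite (proj2 (Nat.eqb_neq _ _) Hli) in H. auto. }
  assert (Ha : Rabs (a l) <= eps * (t * del l)).
  { apply (Rmult_le_compat_r (eps * del l)) in Hql; [|nra].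
    unfold Rdiv in Hql. rewrite Rmult_assoc, Rinv_l, Rmult_1_r in Hql by nra. lra. }
  pose proof (exp_ineq1_le (t * del l)). pose proof (exp_pos (- (t * del l))).
  assert (Hinv : exp (t * del l) * exp (- (t * del l)) = 1)
    by (rewrite <- exp_plus, Rplus_opp_r; apply exp_0).
  assert (a l <= Rabs (a l)) by apply Rle_abs.
  apply Rle_trans with (eps * exp (t * del l) * exp (- (t * del l))); [|nra].
  apply Rmult_le_compat_r; nra.
Qed.

Lemma extreme_col_separated n m A i : distinct_columns n m A -> (i < m)%nat ->
  isExtreme n m A (A i) -> exists v, forall l, (l < m)%nat -> l <> i -> dot n (A l) v < dot n (A i) v.
Proof.
  intros Hd Hi Hex.
  destruct (gordan n m (fun l => negb (l =? i)%nat) (fun l j => A i j - A l j)) as [[v Hv]|[b Hb]].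
  - exists v. intros l Hl Hli. specialize (Hv l Hl).
    rewrite (proj2 (Nat.eqb_neq _ _) Hli) in Hv. specialize (Hv eq_refl).
    assert (dot n (fun j => A i j - A l j) v = dot n (A i) v - dot n (A l) v)
      by (unfold dot; rewrite <- sumR_minus; apply sumR_ext; intros; ring).
    lra.
  - exfalso. pose proof Hb as [B0 [B1 [B2 B3]]].
    assert (Hrep : conv_weights n m A (fun l => negb (l =? i)%nat) b (A i)).
    { split; [|split; [|split]]; auto. intros j Hj. specialize (B3 j Hj).
      rewrite (sumR_ext _ _ (fun l => A i j * b l - b l * A l j)), sumR_minus, sumR_scal, B2 in B3
        by (intros; ring).
      lra. }
    destruct (sumR_pos_term m b B0 B2) as [l0 [Hl0 Hb0]].
    assert (l0 <> i) by (intros ->; rewrite B1 in Hb0; [lra|auto|now rewrite Nat.eqb_refl]).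
    apply (Hd l0 i); auto. eapply extreme_weight_pos_col; eauto.
Qed.

Lemma extreme_coef_nonneg n m A c i : distinct_columns n m A -> (i < m)%nat ->
  isExtreme n m A (A i) -> C_NNS n m A c -> 0 <= c i.
Proof.
  intros Hd Hi Hex Hnn. apply Rnot_lt_le. intros Hc.
  destruct (extreme_col_separated n m A i Hd Hi Hex) as [v Hv].
  set (del := fun l => dot n (A i) v - dot n (A l) v).
  assert (Hm : 0 < INR m) by (apply lt_0_INR; lia).
  (* along the ray [t v] the term of [A i] dominates all the others *)
  destruct (exp_decay_uniform m i c del (- c i / (2 * INR m))) as [t [Ht Hdec]].
  - apply Rdiv_lt_0_compat; lra.
  - intros l Hl Hli. specialize (Hv l Hl Hli). unfold del. lra.
  - specialize (Hnn (fun j => t * v j)). unfold Sig in Hnn.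
    rewrite (sumR_ext _ _ (fun l => exp (t * dot n (A i) v) * (c l * exp (- (t * del l))))),
      sumR_scal in Hnn.
    2:{ intros l Hl. rewrite dot_scal_r, <- Rmult_assoc, (Rmult_comm (exp _) (c l)), Rmult_assoc,
          <- exp_plus. unfold del. do 2 f_equal. ring. }
    assert (Hsum : sumR m (fun l => c l * exp (- (t * del l)))
              <= sumR m (fun l => (if (l =? i)%nat then c i else 0) + - c i / (2 * INR m))).
    { apply sumR_le. intros l Hl. destruct (Nat.eqb_spec l i) as [->|Hli].
      - unfold del. rewrite Rminus_diag, Rmult_0_r, Ropp_0, exp_0.
        assert (0 < - c i / (2 * INR m)) by (apply Rdiv_lt_0_compat; lra). lra.
      - specialize (Hdec l Hl Hli). lra. }
    rewrite sumR_plus, sumR_delta1, sumR_const in Hsum by auto.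
    assert (INR m * (- c i / (2 * INR m)) = - c i / 2) by (field; lra).
    pose proof (exp_pos (t * dot n (A i) v)). nra.
Qed.

Lemma C_SAGE_NNS n m A c : C_SAGE n m A c -> C_NNS n m A c.
Proof.
  intros [cs [Hage Hsum]] x. unfold Sig.
  rewrite (sumR_ext _ _ (fun i => sumR m (fun k => cs k i * exp (dot n (A i) x)))).
  - rewrite sumR_swap. apply sumR_nonneg. intros k Hk. apply (Hage k Hk).
  - intros i Hi. rewrite Hsum, Rmult_comm, <- sumR_scal by auto. apply sumR_ext. intros; ring.
Qed.

Lemma C_AGE_zero n m A k : C_AGE n m A k (fun _ => 0).
Proof.
  split; [|intros; lra]. intros x. unfold Sig. rewrite sumR_zero; [lra|]. intros; ring.
Qed.

Lemma C_AGE_SAGE n m A c k : (k < m)%nat -> C_AGE n m A k c -> C_SAGE n m A c.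
Proof.
  intros Hk Hage. exists (fun k' => if (k' =? k)%nat then c else (fun _ => 0)). split.
  - intros k' Hk'. destruct (Nat.eqb_spec k' k) as [->|]; [auto|apply C_AGE_zero].
  - intros i Hi. rewrite (sumR_single _ _ k Hk), Nat.eqb_refl; auto.
    intros k' _ Hk'. apply Nat.eqb_neq in Hk'. rewrite Hk'. auto.
Qed.

Lemma C_NNS_one_negative_SAGE n m A c : C_NNS n m A c ->
  (forall i j, (i < m)%nat -> (j < m)%nat -> c i < 0 -> c j < 0 -> i = j) -> C_SAGE n m A c.
Proof.
  intros Hnn Hone. destruct m as [|m'].
  { exists (fun _ _ => 0). split; intros; lia. }
  destruct (classic (exists k, (k < S m')%nat /\ c k < 0)) as [[k [Hk Hck]]|Hno].
  - apply (C_AGE_SAGE _ _ _ _ k Hk). split; auto. intros i Hi Hik.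
    apply Rnot_lt_le. intros Hci. apply Hik. eapply Hone; eauto.
  - apply (C_AGE_SAGE _ _ _ _ 0%nat); [lia|]. split; auto. intros i Hi _.
    apply Rnot_lt_le. intros Hci. apply Hno. eauto.
Qed.

Lemma exp_dot_conv_weights n m A S lam y x xs : conv_weights n m A S lam y ->
  exp (dot n y x) <= exp (dot n y xs) * sumR m (fun l => lam l * exp (dot n (A l) x - dot n (A l) xs)).
Proof.
  intros Hlam. pose proof Hlam as [L0 [_ [L2 L3]]].
  assert (Hy : forall z, sumR m (fun l => lam l * dot n (A l) z) = dot n y z)
    by (intros z; rewrite <- dot_sum_l; apply dot_ext_l; intros j Hj; symmetry; auto).
  pose proof (exp_convex_comb m lam (fun l => dot n (A l) x - dot n (A l) xs) L0 L2) as Hj.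
  rewrite (sumR_ext _ _ (fun l => lam l * dot n (A l) x - lam l * dot n (A l) xs)), sumR_minus, !Hy
    in Hj by (intros; ring).
  replace (exp (dot n y x)) with (exp (dot n y xs) * exp (dot n y x - dot n y xs))
    by (rewrite <- exp_plus; f_equal; ring).
  apply Rmult_le_compat_l; [left; apply exp_pos|auto].
Qed.

(* Weighted AM-GM around the base point [xs] certifies this AGE signomial. *)
Lemma C_AGE_of_conv_weights n m A S lam P d xs cc : (P < m)%nat ->
  conv_weights n m A S lam (A P) -> S P = false -> 0 <= d -> cc P = - d ->
  (forall l, (l < m)%nat -> l <> P ->
     d * lam l * exp (dot n (A P) xs - dot n (A l) xs) <= cc l) ->
  C_AGE n m A P cc.
Proof.
  intros HP Hlam HSP Hd HcP Hcc. pose proof Hlam as [L0 [L1 _]].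
  assert (HlP : lam P = 0) by auto.
  split.
  - intros x. unfold Sig.
    set (e := fun l => exp (dot n (A l) x - dot n (A l) xs)).
    apply Rle_trans with (sumR m (fun l =>
      d * exp (dot n (A P) xs) * (lam l * e l) - (if (l =? P)%nat then d else 0) * exp (dot n (A l) x))).
    + rewrite sumR_minus, sumR_scal, sumR_delta by auto.
      pose proof (exp_dot_conv_weights n m A S lam (A P) x xs Hlam) as H.
      apply (Rmult_le_compat_l d) in H; auto. unfold e. lra.
    + apply sumR_le. intros l Hl. destruct (Nat.eqb_spec l P) as [->|HlP'].
      * rewrite HlP, HcP. lra.
      * specialize (Hcc l Hl HlP'). pose proof (exp_pos (dot n (A l) x)).
        assert (Hshift : exp (dot n (A P) xs) * e l
                         = exp (dot n (A P) xs - dot n (A l) xs) * exp (dot n (A l) x))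
          by (unfold e; rewrite <- !exp_plus; f_equal; ring).
        apply Rle_trans with (d * lam l * exp (dot n (A P) xs - dot n (A l) xs) * exp (dot n (A l) x));
          [right; transitivity (d * lam l * (exp (dot n (A P) xs) * e l)); [ring|rewrite Hshift; ring]|
           apply Rmult_le_compat_r; lra].
  - intros l Hl HlP'. eapply Rle_trans; [|apply (Hcc l Hl HlP')].
    assert (0 <= lam l) by auto. pose proof (exp_pos (dot n (A P) xs - dot n (A l) xs)).
    apply Rmult_le_pos; [|lra]. nra.
Qed.

(* [skip k] enumerates the naturals different from [k]; [unskip k] is its inverse. *)
Definition skip (k t : nat) : nat := if (t <? k)%nat then t else S t.
Definition unskip (k j : nat) : nat := if (j <? k)%nat then j else (j - 1)%nat.

Lemma skip_neq k t : skip k t <> k.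
Proof. unfold skip. destruct (Nat.ltb_spec t k); lia. Qed.

Lemma unskip_skip k t : unskip k (skip k t) = t.
Proof.
  unfold skip, unskip. destruct (Nat.ltb_spec t k).
  - rewrite (proj2 (Nat.ltb_lt _ _)) by lia. auto.
  - rewrite (proj2 (Nat.ltb_ge _ _)) by lia. lia.
Qed.

Lemma skip_lt k t N : (k < N)%nat -> (t < N - 1)%nat -> (skip k t < N)%nat.
Proof. unfold skip. destruct (Nat.ltb_spec t k); lia. Qed.

Lemma skip_unskip k j N : (k < N)%nat -> (j < N)%nat -> j <> k ->
  (unskip k j < N - 1)%nat /\ skip k (unskip k j) = j.
Proof.
  intros. unfold skip, unskip. destruct (Nat.ltb_spec j k).
  - rewrite (proj2 (Nat.ltb_lt _ _)) by lia. split; [lia|auto].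
  - rewrite (proj2 (Nat.ltb_ge _ _)) by lia. split; lia.
Qed.

Lemma sumR_skip N f k : (k < N)%nat -> sumR N f = f k + sumR (N - 1) (fun t => f (skip k t)).
Proof.
  revert k. induction N as [|N IH]; intros k Hk; [lia|].
  replace (S N - 1)%nat with N by lia. simpl.
  destruct (Nat.eq_dec k N) as [->|HkN].
  - rewrite (sumR_ext N (fun t => f (skip N t)) f); [lra|].
    intros i Hi. unfold skip. rewrite (proj2 (Nat.ltb_lt _ _)) by lia. auto.
  - rewrite (IH k) by lia. destruct N; [lia|]. replace (S N - 1)%nat with N by lia. simpl.
    unfold skip at 3. rewrite (proj2 (Nat.ltb_ge N k)) by lia. ring.
Qed.

Lemma homogeneous_nontrivial_solution r N (V : nat -> nat -> R) : (r < N)%nat ->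
  exists z, (exists j, (j < N)%nat /\ z j <> 0) /\
    forall t, (t < r)%nat -> sumR N (fun j => V t j * z j) = 0.
Proof.
  revert N V. induction r as [|r IH]; intros N V HN.
  { exists (fun _ => 1). split; [exists 0%nat; split; [lia|lra]|intros; lia]. }
  destruct (classic (exists j0, (j0 < N)%nat /\ V r j0 <> 0)) as [[j0 [Hj0 Hp]]|Hzero].
  - (* eliminate the unknown [j0] using equation [r] *)
    set (p := V r j0) in *.
    set (W := fun t j => V t j - V t j0 / p * V r j).
    destruct (IH (N - 1)%nat (fun t j => W t (skip j0 j)) ltac:(lia))
      as [z' [[j1 [Hj1 Hz1]] Hz2]].
    set (Sr := sumR (N - 1) (fun j' => V r (skip j0 j') * z' j')).
    set (z := fun j => if (j =? j0)%nat then - Sr / p else z' (unskip j0 j)).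
    assert (Hzs : forall j', z (skip j0 j') = z' j').
    { intros j'. unfold z. rewrite (proj2 (Nat.eqb_neq _ _) (skip_neq j0 j')). f_equal. apply unskip_skip. }
    exists z. split.
    + exists (skip j0 j1). split; [apply skip_lt; auto|]. rewrite Hzs. auto.
    + intros t Ht. rewrite (sumR_skip N _ j0 Hj0). unfold z at 1. rewrite Nat.eqb_refl.
      rewrite (sumR_ext (N - 1) _ (fun j' => V t (skip j0 j') * z' j')) by (intros; rewrite Hzs; auto).
      destruct (Nat.eq_dec t r) as [->|Htr].
      * fold Sr. fold p. field. auto.
      * specialize (Hz2 t ltac:(lia)). unfold W in Hz2.
        rewrite (sumR_ext _ _ (fun j' => V t (skip j0 j') * z' j' - V t j0 / p * (V r (skip j0 j') * z' j'))),
          sumR_minus, sumR_scal in Hz2 by (intros; ring).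
        fold Sr in Hz2.
        replace (sumR (N - 1) (fun j' => V t (skip j0 j') * z' j')) with (V t j0 / p * Sr) by lra.
        field. auto.
  - destruct (IH N V ltac:(lia)) as [z [Hz1 Hz2]]. exists z. split; auto.
    intros t Ht. destruct (Nat.eq_dec t r) as [->|]; [|apply Hz2; lia].
    apply sumR_zero. intros j Hj. destruct (Req_dec (V r j) 0) as [->|]; [ring|exfalso; eauto].
Qed.

(** * Affine functions on a simplex *)

Lemma affine_vanishing_but_one n (p : nat -> nat -> R) ki : (ki < S n)%nat ->
  exists z, (exists j, (j < S n)%nat /\ z j <> 0) /\
    forall k, (k < S n)%nat -> k <> ki -> dot n (p k) z + z n = 0.
Proof.
  intros Hki.
  (* [z] collects the linear part [z 0 .. z (n-1)] and the constant [z n] *)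
  destruct (homogeneous_nontrivial_solution n (S n)
              (fun t j => if (j <? n)%nat then p (skip ki t) j else 1) ltac:(lia))
    as [z [Hz Hsol]].
  exists z. split; auto. intros k Hk Hkk.
  destruct (skip_unskip ki k (S n) Hki Hk Hkk) as [Ht Hs].
  specialize (Hsol (unskip ki k) ltac:(lia)). simpl in Hsol.
  rewrite Nat.ltb_irrefl, Hs, Rmult_1_l in Hsol. rewrite <- Hsol. f_equal.
  apply sumR_ext. intros j Hj. rewrite (proj2 (Nat.ltb_lt _ _) Hj). auto.
Qed.

Lemma affine_conv_weights_dual n m A S lam y i x k : (i < m)%nat -> S i = true ->
  dot n (A i) x + k = 1 ->
  (forall l, (l < m)%nat -> S l = true -> l <> i -> dot n (A l) x + k = 0) ->
  conv_weights n m A S lam y -> dot n y x + k = lam i.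
Proof.
  intros Hi HSi H1 H0 Hlam. rewrite (affine_conv_weights _ _ _ _ _ _ _ _ Hlam).
  pose proof Hlam as [_ [L1 _]]. rewrite (sumR_single _ _ i Hi), H1; [ring|].
  intros l Hl Hli. destruct (S l) eqn:E; [rewrite H0; auto; ring|rewrite L1; auto; ring].
Qed.

Lemma dot_conv_weights_interp n m A S lam y x k W :
  conv_weights n m A S lam y ->
  (forall l, (l < m)%nat -> S l = true -> dot n (A l) x + k = W l) ->
  dot n y x = sumR m (fun l => lam l * W l) - k.
Proof.
  intros Hlam HW. pose proof (affine_conv_weights _ _ _ _ _ _ x k Hlam) as H.
  pose proof Hlam as [_ [L1 _]].
  rewrite (sumR_ext _ _ (fun l => lam l * W l)) in H; [lra|].
  intros l Hl. destruct (S l) eqn:E; [rewrite HW; auto|rewrite L1; auto; ring].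
Qed.

Definition others (P Q l : nat) : bool := negb (l =? P)%nat && negb (l =? Q)%nat.

Lemma others_true P Q l : others P Q l = true <-> l <> P /\ l <> Q.
Proof.
  unfold others. destruct (Nat.eqb_spec l P), (Nat.eqb_spec l Q); simpl; intuition discriminate.
Qed.

Lemma sumR_split_others m f P Q : (P < m)%nat -> (Q < m)%nat -> P <> Q ->
  sumR m f = f P + f Q + sumR m (fun l => if others P Q l then f l else 0).
Proof.
  intros HP HQ HPQ.
  rewrite (sumR_ext m (fun l => if others P Q l then f l else 0)
             (fun l => if (l =? Q)%nat then 0 else if (l =? P)%nat then 0 else f l)).
  - rewrite sumR_remove, sumR_remove, (proj2 (Nat.eqb_neq Q P)) by auto. ring.
  - intros l _. unfold others. destruct (l =? Q)%nat, (l =? P)%nat; reflexivity.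
Qed.

Definition mix (lam mu : nat -> R) (s : R) (l : nat) : R := lam l * s + mu l * (1 - s).

Definition geo m (w lam mu c : nat -> R) (s : R) : R :=
  exp (sumR m (fun l => w l * ln (mix lam mu s l / c l))).

Lemma continuity_pt_sumR m (F : nat -> R -> R) s :
  (forall l, (l < m)%nat -> continuity_pt (F l) s) -> continuity_pt (fun s => sumR m (fun l => F l s)) s.
Proof.
  induction m; intros H; simpl.
  - apply continuity_pt_const. intros a b. auto.
  - change (continuity_pt ((fun s => sumR m (fun l => F l s)) + F m)%F s).
    apply continuity_pt_plus; [apply IHm; intros; apply H|apply H]; lia.
Qed.

Lemma geo_continuous m w lam mu c s : 0 <= s <= 1 ->
  (forall l, (l < m)%nat -> w l = 0 \/ (0 < lam l /\ 0 < mu l /\ 0 < c l)) ->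
  continuity_pt (geo m w lam mu c) s.
Proof.
  intros Hs H. unfold geo.
  change (continuity_pt (comp exp (fun s => sumR m (fun l => w l * ln (mix lam mu s l / c l)))) s).
  apply continuity_pt_comp; [|apply derivable_continuous_pt, derivable_pt_exp].
  apply continuity_pt_sumR. intros l Hl. destruct (H l Hl) as [H0|[H1 [H2 H3]]].
  - apply (continuity_pt_locally_ext (fun _ => 0) _ 1); [lra| |apply continuity_pt_const; intros a b; auto].
    intros y _. rewrite H0. ring.
  - change (continuity_pt (mult_real_fct (w l) (comp ln (fun s => mix lam mu s l / c l))) s).
    apply continuity_pt_scal, continuity_pt_comp; [unfold mix; reg; lra|].
    apply derivable_continuous_pt. exists (/ (mix lam mu s l / c l)). apply derivable_pt_lim_ln.
    unfold mix. apply Rdiv_lt_0_compat; [nra|auto].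
Qed.

Section Simplex.

Variables (n m : nat) (A : nat -> nat -> R) (P Q : nat).
Hypothesis HP : (P < m)%nat.
Hypothesis HQ : (Q < m)%nat.
Hypothesis HPQ : P <> Q.
Hypothesis Hdist : distinct_columns n m A.
Hypothesis HintP : inInterior n m A (A P).
Hypothesis HintQ : inInterior n m A (A Q).
Hypothesis Hext : forall l, (l < m)%nat -> l <> P -> l <> Q -> isExtreme n m A (A l).
Hypothesis Hsimplex : num_extreme_points n m A (S n).

Lemma dim_pos : (1 <= n)%nat.
Proof. destruct n; [|lia]. exfalso. apply (Hdist P Q HP HQ HPQ). intros j Hj. lia. Qed.

Lemma inNew_conv_others y : inNew n m A y -> inConv n m A (others P Q) y.
Proof.
  assert (Hne : forall z, inInterior n m A z -> ~ isExtreme n m A z)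
    by (intros; apply interior_not_extreme; auto using dim_pos).
  unfold others. apply (conv_remove_nonextreme n m A (fun l => negb (l =? P)%nat) Q); auto.
  apply (conv_remove_nonextreme n m A (fun _ => true) P); auto using inNew_inConv_all.
Qed.

Lemma affine_zero_on_others x k :
  (forall l, (l < m)%nat -> others P Q l = true -> dot n (A l) x + k = 0) ->
  (forall j, (j < n)%nat -> x j = 0) /\ k = 0.
Proof.
  intros Hv.
  assert (Hall : forall y, inNew n m A y -> dot n y x + k = 0).
  { intros y Hy. destruct (inNew_conv_others y Hy) as [lam Hlam].
    rewrite (affine_conv_weights _ _ _ _ _ _ x k Hlam). apply sumR_zero.
    intros l Hl. destruct (others P Q l) eqn:E; [rewrite Hv; auto; ring|].
    destruct Hlam as [_ [L1 _]]. rewrite L1; auto. ring. }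
  destruct HintP as [eps [He Hball]].
  assert (Hx : forall j, (j < n)%nat -> x j = 0).
  { intros j Hj.
    assert (Hy : inNew n m A (fun i => A P i + eps / 2 * (if (i =? j)%nat then 1 else 0))).
    { apply Hball. intros i Hi.
      replace (A P i + eps / 2 * (if (i =? j)%nat then 1 else 0) - A P i)
        with (eps / 2 * (if (i =? j)%nat then 1 else 0)) by ring.
      rewrite Rabs_mult, Rabs_right by lra.
      destruct (i =? j)%nat; [rewrite Rabs_R1|rewrite Rabs_R0]; lra. }
    pose proof (Hall _ Hy) as H1. pose proof (Hall _ (col_inNew n m A P HP)) as H0.
    rewrite dot_plus_l, dot_scal_l, dot_unit_l in H1 by auto.
    assert (eps / 2 * x j = 0) by lra. apply Rmult_integral in H. lra. }
  split; auto. pose proof (Hall _ (col_inNew n m A P HP)) as H0.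
  rewrite dot_zero_r in H0; auto. lra.
Qed.

Lemma others_dual_affine i : (i < m)%nat -> others P Q i = true ->
  exists x k, dot n (A i) x + k = 1 /\
    forall l, (l < m)%nat -> others P Q l = true -> l <> i -> dot n (A l) x + k = 0.
Proof.
  intros Hi HEi. apply others_true in HEi as [HiP HiQ].
  destruct Hsimplex as [p [Hpe [Hpd Hpc]]].
  destruct (Hpc (A i) (Hext i Hi HiP HiQ)) as [ki [Hki Hvi]].
  destruct (affine_vanishing_but_one n p ki Hki) as [z [[j1 [Hj1 Hz1]] Hz]].
  (* every other vertex column is a vertex [p k] with [k <> ki] *)
  assert (Hvan : forall l, (l < m)%nat -> others P Q l = true -> l <> i -> dot n (A l) z + z n = 0).
  { intros l Hl HEl Hli. apply others_true in HEl as [HlP HlQ].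
    destruct (Hpc (A l) (Hext l Hl HlP HlQ)) as [k [Hk Hvl]].
    assert (k <> ki) by (intros ->; apply (Hdist l i); auto; intros j Hj; rewrite Hvl, Hvi; auto).
    rewrite (dot_ext_l n (A l) (p k)) by auto. apply Hz; auto. }
  set (L := dot n (A i) z + z n).
  assert (HL : L <> 0).
  { intros HL0. destruct (affine_zero_on_others z (z n)) as [Hx Hk].
    - intros l Hl HEl. destruct (Nat.eq_dec l i) as [->|]; auto.
    - apply Hz1. destruct (Nat.eq_dec j1 n) as [->|]; auto. apply Hx. lia. }
  exists (fun j => / L * z j), (/ L * z n). split.
  - rewrite dot_scal_r. unfold L in *. field. auto.
  - intros l Hl HEl Hli. rewrite dot_scal_r, <- Rmult_plus_distr_l, Hvan; auto. ring.
Qed.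

Lemma others_interpolation W : exists x k,
  forall l, (l < m)%nat -> others P Q l = true -> dot n (A l) x + k = W l.
Proof.
  (* add the dual functions of the vertex columns one at a time *)
  assert (Hr : forall r, exists x k,
    forall l, (l < r)%nat -> (l < m)%nat -> others P Q l = true -> dot n (A l) x + k = W l).
  { induction r as [|r [x [k IH]]].
    - exists (fun _ => 0), 0. intros; lia.
    - destruct (Nat.lt_ge_cases r m) as [Hrm|Hrm];
        [destruct (others P Q r) eqn:Er|].
      + destruct (others_dual_affine r Hrm Er) as [u [a [Hu1 Hu0]]].
        set (gap := W r - (dot n (A r) x + k)).
        exists (fun j => x j + gap * u j), (k + gap * a). intros l Hl Hlm El.
        rewrite dot_plus_r, dot_scal_r.
        destruct (Nat.eq_dec l r) as [->|Hlr].
        * replace (dot n (A r) x + gap * dot n (A r) u + (k + gap * a))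
            with (dot n (A r) x + k + gap * (dot n (A r) u + a)) by ring.
          rewrite Hu1. unfold gap. ring.
        * replace (dot n (A l) x + gap * dot n (A l) u + (k + gap * a))
            with (dot n (A l) x + k + gap * (dot n (A l) u + a)) by ring.
          rewrite Hu0, IH by (auto; lia). ring.
      + exists x, k. intros l Hl Hlm El. destruct (Nat.eq_dec l r) as [->|]; [congruence|].
        apply IH; auto. lia.
      + exists x, k. intros l Hl Hlm El. apply IH; auto. lia. }
  destruct (Hr m) as [x [k H]]. exists x, k. auto.
Qed.

Lemma conv_others_interior_pos y lam : inInterior n m A y ->
  conv_weights n m A (others P Q) lam y -> forall i, (i < m)%nat -> others P Q i = true -> 0 < lam i.
Proof.
  intros [eps [He Hball]] Hlam i Hi HEi.
  destruct (others_dual_affine i Hi HEi) as [x [k [Hx1 Hx0]]].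
  assert (Hy : dot n y x + k = lam i) by (eapply affine_conv_weights_dual; eauto).
  apply Rnot_le_lt. intros Hle.
  (* moving from [y] against [x] stays in New(A) but makes the dual function negative *)
  set (s1 := sumR n (fun j => Rabs (x j))).
  assert (Hs1 : 0 <= s1) by (apply sumR_nonneg; intros; apply Rabs_pos).
  set (del := eps / (1 + s1)).
  assert (Hdel : 0 < del) by (apply Rdiv_lt_0_compat; lra).
  assert (Hz : inNew n m A (fun j => y j + - del * x j)).
  { apply Hball. intros j Hj. replace (y j + - del * x j - y j) with (- del * x j) by ring.
    rewrite Rabs_mult, Rabs_Ropp, Rabs_right by lra.
    assert (Rabs (x j) <= s1)
      by (apply (sumR_term_le n (fun j => Rabs (x j))); auto; intros; apply Rabs_pos).
    assert (del * (1 + s1) = eps) by (unfold del; field; lra). nra. }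
  destruct (inNew_conv_others _ Hz) as [nu Hnu].
  assert (Hzv : dot n (fun j => y j + - del * x j) x + k = nu i)
    by (eapply affine_conv_weights_dual; eauto).
  rewrite dot_plus_l, dot_scal_l in Hzv.
  assert (0 <= nu i) by (destruct Hnu; auto).
  assert (0 <= dot n x x) by (apply sumR_nonneg; intros; nra).
  assert (Hxz : forall j, (j < n)%nat -> x j = 0) by (apply dot_self_eq0; nra).
  rewrite dot_zero_r in Hx1, Hy by auto. destruct Hlam as [L0 _]. pose proof (L0 i Hi). lra.
Qed.


Section Coefficients.

Variables (c lam mu : nat -> R).
Hypothesis Hnn : C_NNS n m A c.
Hypothesis HcP : c P < 0.
Hypothesis HcQ : c Q < 0.
Hypothesis Hlam : conv_weights n m A (others P Q) lam (A P).
Hypothesis Hmu : conv_weights n m A (others P Q) mu (A Q).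

Lemma Sig_interp x k W :
  (forall l, (l < m)%nat -> others P Q l = true -> dot n (A l) x + k = W l) ->
  Sig n m A c x = exp (- k) * (sumR m (fun l => if others P Q l then c l * exp (W l) else 0) +
     c P * exp (sumR m (fun l => lam l * W l)) + c Q * exp (sumR m (fun l => mu l * W l))).
Proof.
  intros HW. unfold Sig. rewrite (sumR_split_others m _ P Q HP HQ HPQ).
  rewrite (dot_conv_weights_interp _ _ _ _ _ _ _ _ _ Hlam HW),
          (dot_conv_weights_interp _ _ _ _ _ _ _ _ _ Hmu HW).
  rewrite (sumR_ext _ (fun l => if others P Q l then c l * exp (dot n (A l) x) else 0)
             (fun l => exp (- k) * (if others P Q l then c l * exp (W l) else 0))), sumR_scal.
  - unfold Rminus. rewrite !exp_plus. ring.
  - intros l Hl. destruct (others P Q l) eqn:E; [|ring].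
    rewrite <- (HW l Hl E), <- Rmult_assoc, (Rmult_comm (exp (- k)) (c l)), Rmult_assoc, <- exp_plus.
    do 2 f_equal. ring.
Qed.

Lemma others_coef_pos i : (i < m)%nat -> others P Q i = true -> 0 < c i.
Proof.
  intros Hi HE. pose proof HE as [HiP HiQ]%others_true.
  assert (Hc0 : 0 <= c i) by (apply (extreme_coef_nonneg n m A c i); auto).
  apply Rnot_le_lt. intros Hle. assert (Hci : c i = 0) by lra.
  assert (Hli : 0 < lam i) by (apply (conv_others_interior_pos (A P) lam); auto).
  set (D := sumR m (fun l => if others P Q l then c l else 0)).
  (* raising the value at the vertex [A i] alone drives the term of [A P] to minus infinity *)
  set (T := (Rabs D + 1) / (lam i * (- c P))).
  set (W := fun l => if (l =? i)%nat then T else 0).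
  destruct (others_interpolation W) as [x [k Hxk]].
  specialize (Hnn x). rewrite (Sig_interp x k W Hxk) in Hnn.
  assert (HD : sumR m (fun l => if others P Q l then c l * exp (W l) else 0) = D).
  { apply sumR_ext. intros l Hl'. unfold W. destruct (others P Q l); auto.
    destruct (Nat.eqb_spec l i) as [->|]; [rewrite Hci; ring|rewrite exp_0; ring]. }
  assert (Hs : forall nu, sumR m (fun l => nu l * W l) = nu i * T).
  { intros nu. unfold W. rewrite (sumR_ext _ _ (fun l => (if (l =? i)%nat then T else 0) * nu l)),
      sumR_delta by (auto || intros; ring). ring. }
  rewrite HD, !Hs in Hnn.
  assert (1 + lam i * T <= exp (lam i * T)) by apply exp_ineq1_le.
  assert (lam i * T * (- c P) = Rabs D + 1) by (unfold T; field; lra).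
  assert (c P * exp (lam i * T) <= c P * (1 + lam i * T)) by (apply Rmult_le_compat_neg_l; lra).
  assert (c Q * exp (mu i * T) < 0) by (pose proof (exp_pos (mu i * T)); nra).
  assert (D <= Rabs D) by apply Rle_abs.
  pose proof (exp_pos (- k)). nra.
Qed.

Lemma mix_others_pos s l : 0 <= s <= 1 -> (l < m)%nat -> others P Q l = true -> 0 < mix lam mu s l.
Proof.
  intros Hs Hl E. unfold mix.
  assert (0 < lam l) by (apply (conv_others_interior_pos (A P) lam); auto).
  assert (0 < mu l) by (apply (conv_others_interior_pos (A Q) mu); auto). nra.
Qed.

Lemma exp_interp_mix s x k : 0 <= s <= 1 ->
  (forall l, (l < m)%nat -> others P Q l = true -> dot n (A l) x + k = ln (mix lam mu s l / c l)) ->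
  forall l, (l < m)%nat -> others P Q l = true -> c l * exp (dot n (A l) x) = exp (- k) * mix lam mu s l.
Proof.
  intros Hs Hx l Hl E. replace (dot n (A l) x) with (ln (mix lam mu s l / c l) + - k)
    by (rewrite <- (Hx l Hl E); ring).
  pose proof (others_coef_pos l Hl E). pose proof (mix_others_pos s l Hs Hl E).
  rewrite exp_plus, exp_ln by (apply Rdiv_lt_0_compat; auto). field. lra.
Qed.

Lemma geo_budget s : 0 <= s <= 1 ->
  - c P * geo m lam lam mu c s + - c Q * geo m mu lam mu c s <= 1.
Proof.
  intros Hs. destruct (others_interpolation (fun l => ln (mix lam mu s l / c l))) as [x [k Hx]].
  pose proof (Hnn x) as H. rewrite (Sig_interp x k _ Hx) in H.
  pose proof Hlam as [_ [L1 [L2 _]]]. pose proof Hmu as [_ [M1 [M2 _]]].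
  assert (Hsum : sumR m (fun l => if others P Q l then c l * exp (ln (mix lam mu s l / c l)) else 0) = 1).
  { transitivity (s * sumR m lam + (1 - s) * sumR m mu); [|rewrite L2, M2; ring].
    rewrite <- !sumR_scal, <- sumR_plus. apply sumR_ext. intros l Hl.
    destruct (others P Q l) eqn:E; [|rewrite L1, M1 by auto; ring].
    pose proof (others_coef_pos l Hl E). pose proof (mix_others_pos s l Hs Hl E).
    rewrite exp_ln by (apply Rdiv_lt_0_compat; auto). unfold mix. field. lra. }
  rewrite Hsum in H. unfold geo. pose proof (exp_pos (- k)). nra.
Qed.

Lemma balanced_mix : exists s, 0 <= s <= 1 /\
  - c P * geo m lam lam mu c s <= s /\ - c Q * geo m mu lam mu c s <= 1 - s.
Proof.
  assert (Hw : forall w, conv_weights n m A (others P Q) w (A P) \/ conv_weights n m A (others P Q) w (A Q) ->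
    forall l, (l < m)%nat -> w l = 0 \/ (0 < lam l /\ 0 < mu l /\ 0 < c l)).
  { intros w Hw l Hl. destruct (others P Q l) eqn:E.
    - right. split; [apply (conv_others_interior_pos (A P) lam)|split;
        [apply (conv_others_interior_pos (A Q) mu)|apply others_coef_pos]]; auto.
    - left. destruct Hw as [[_ [W1 _]]|[_ [W1 _]]]; auto. }
  (* a zero of [s + c P * geo lam] on [0, 1]; the budget then bounds the other term *)
  destruct (IVT_interv (fun s => s + c P * geo m lam lam mu c s) 0 1) as [s [Hs Hz]].
  - intros s Hs. apply continuity_pt_plus; [apply derivable_continuous_pt, derivable_pt_id|].
    apply continuity_pt_scal, geo_continuous; auto.
  - lra.
  - pose proof (exp_pos (sumR m (fun l => lam l * ln (mix lam mu 0 l / c l)))). unfold geo. nra.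
  - pose proof (geo_budget 1 ltac:(lra)).
    pose proof (exp_pos (sumR m (fun l => mu l * ln (mix lam mu 1 l / c l)))). unfold geo in *. nra.
  - exists s. pose proof (geo_budget s Hs). split; [auto|split]; lra.
Qed.

Lemma AGE_parts_fit s xs ks : 0 <= s <= 1 ->
  - c P * geo m lam lam mu c s <= s -> - c Q * geo m mu lam mu c s <= 1 - s ->
  (forall l, (l < m)%nat -> others P Q l = true -> dot n (A l) xs + ks = ln (mix lam mu s l / c l)) ->
  forall l, (l < m)%nat -> others P Q l = true ->
    - c P * lam l * exp (dot n (A P) xs - dot n (A l) xs)
    + - c Q * mu l * exp (dot n (A Q) xs - dot n (A l) xs) <= c l.
Proof.
  intros Hs Hs1 Hs2 Hxs l Hl E.
  assert (Hc := exp_interp_mix s xs ks Hs Hxs l Hl E).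
  rewrite (dot_conv_weights_interp _ _ _ _ _ _ _ _ _ Hlam Hxs),
          (dot_conv_weights_interp _ _ _ _ _ _ _ _ _ Hmu Hxs).
  unfold geo in Hs1, Hs2. unfold mix in Hc.
  set (G1 := exp (sumR m (fun l => lam l * ln (mix lam mu s l / c l)))) in *.
  set (G2 := exp (sumR m (fun l => mu l * ln (mix lam mu s l / c l)))) in *.
  set (e := exp (- dot n (A l) xs)).
  assert (He : forall a, exp (a - ks - dot n (A l) xs) = exp a * exp (- ks) * e)
    by (intros a; unfold e, Rminus; rewrite !exp_plus; ring).
  assert (Hce : c l = exp (- ks) * (lam l * s + mu l * (1 - s)) * e).
  { unfold e. rewrite <- Hc, Rmult_assoc, <- exp_plus, Rplus_opp_r, exp_0. ring. }
  rewrite !He, Hce. fold G1 G2.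
  pose proof (exp_pos (- ks)). assert (0 < e) by apply exp_pos.
  pose proof Hlam as [L0 _]. pose proof Hmu as [M0 _].
  assert (0 <= lam l) by auto. assert (0 <= mu l) by auto.
  assert (lam l * (- c P * G1) <= lam l * s) by (apply Rmult_le_compat_l; auto).
  assert (mu l * (- c Q * G2) <= mu l * (1 - s)) by (apply Rmult_le_compat_l; auto).
  assert ((lam l * (- c P * G1) + mu l * (- c Q * G2)) * (exp (- ks) * e)
          <= (lam l * s + mu l * (1 - s)) * (exp (- ks) * e)) by (apply Rmult_le_compat_r; nra).
  lra.
Qed.

Lemma two_negative_SAGE : C_SAGE n m A c.
Proof.
  destruct balanced_mix as [s [Hs [Hs1 Hs2]]].
  destruct (others_interpolation (fun l => ln (mix lam mu s l / c l))) as [xs [ks Hxs]].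
  pose proof (AGE_parts_fit s xs ks Hs Hs1 Hs2 Hxs) as Hfit.
  pose proof Hlam as [_ [L1 _]]. pose proof Hmu as [_ [M1 _]].
  assert (HPo : others P Q P = false) by (unfold others; now rewrite Nat.eqb_refl).
  assert (HQo : others P Q Q = false) by (unfold others; now rewrite Nat.eqb_refl, andb_false_r).
  set (cs1 := fun l => if (l =? P)%nat then c P else
                 - c P * lam l * exp (dot n (A P) xs - dot n (A l) xs)).
  set (cs2 := fun l => c l - cs1 l).
  exists (fun k => if (k =? P)%nat then cs1 else if (k =? Q)%nat then cs2 else (fun _ => 0)). split.
  - intros k Hk. destruct (Nat.eqb_spec k P) as [->|HkP]; [|destruct (Nat.eqb_spec k Q) as [->|HkQ]].
    + apply (C_AGE_of_conv_weights n m A (others P Q) lam P (- c P) xs); auto;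
        [lra|unfold cs1; rewrite Nat.eqb_refl; ring|].
      intros l Hl HlP. unfold cs1. rewrite (proj2 (Nat.eqb_neq _ _) HlP). lra.
    + apply (C_AGE_of_conv_weights n m A (others P Q) mu Q (- c Q) xs); auto; [lra| |].
      * unfold cs2, cs1. rewrite (proj2 (Nat.eqb_neq _ _) (not_eq_sym HPQ)), L1 by auto. ring.
      * intros l Hl HlQ. unfold cs2, cs1. destruct (Nat.eqb_spec l P) as [->|HlP].
        -- rewrite M1 by auto. lra.
        -- pose proof (Hfit l Hl (proj2 (others_true P Q l) (conj HlP HlQ))). lra.
    + apply C_AGE_zero.
  - intros i Hi. rewrite (sumR_split_others m _ P Q HP HQ HPQ), Nat.eqb_refl,
      (proj2 (Nat.eqb_neq _ _) (not_eq_sym HPQ)), Nat.eqb_refl, sumR_zero; [unfold cs2; ring|].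
    intros k Hk. destruct (others P Q k) eqn:E; auto. apply others_true in E as [HkP HkQ].
    rewrite (proj2 (Nat.eqb_neq _ _) HkP), (proj2 (Nat.eqb_neq _ _) HkQ). auto.
Qed.

End Coefficients.

Lemma two_interior_SAGE c : C_NNS n m A c -> c P < 0 -> c Q < 0 -> C_SAGE n m A c.
Proof.
  intros Hnn HcP HcQ.
  destruct (inNew_conv_others (A P) (col_inNew n m A P HP)) as [lam Hlam].
  destruct (inNew_conv_others (A Q) (col_inNew n m A Q HQ)) as [mu Hmu].
  apply (two_negative_SAGE c lam mu); auto.
Qed.

End Simplex.

Theorem mainTheorem18 (n m : nat) (A : nat -> nat -> R) :
  distinct_columns n m A ->
  full_dimensional n m A ->
  (forall i, (i < m)%nat -> isExtreme n m A (A i) \/ inInterior n m A (A i)) ->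
  ( (forall i k, (i < m)%nat -> (k < m)%nat ->
        inInterior n m A (A i) -> inInterior n m A (A k) -> i = k)
    \/
    (num_extreme_points n m A (S n) /\
     forall i j k, (i < m)%nat -> (j < m)%nat -> (k < m)%nat ->
        inInterior n m A (A i) -> inInterior n m A (A j) -> inInterior n m A (A k) ->
        i = j \/ j = k \/ i = k) ) ->
  forall c : nat -> R, C_SAGE n m A c <-> C_NNS n m A c.
Proof.
  intros Hd _ Hcol Hcase c. split; [apply C_SAGE_NNS|]. intros Hnn.
  assert (Hneg : forall i, (i < m)%nat -> c i < 0 -> inInterior n m A (A i)).
  { intros i Hi Hci. destruct (Hcol i Hi) as [He|]; auto.
    pose proof (extreme_coef_nonneg n m A c i Hd Hi He Hnn). lra. }
  destruct (classic (exists P Q, (P < m)%nat /\ (Q < m)%nat /\ P <> Q /\ c P < 0 /\ c Q < 0))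
    as [[P [Q [HP [HQ [HPQ [HcP HcQ]]]]]]|Hone].
  - destruct Hcase as [Hatmost1|[Hsimplex Hatmost2]]; [exfalso; apply HPQ; auto|].
    apply (two_interior_SAGE n m A P Q); auto.
    intros l Hl HlP HlQ. destruct (Hcol l Hl) as [|Hint]; auto.
    exfalso. destruct (Hatmost2 P Q l) as [|[|]]; auto.
  - apply C_NNS_one_negative_SAGE; auto. intros i j Hi Hj Hci Hcj.
    apply NNPP. intros Hij. apply Hone. exists i, j. auto.
Qed.
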